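(* Let $f_1,\dots,f_n$ satisfy Assumptions A1, A2 and $f_0$ satisfy Assumption A3. Then $(\hat x,\hat\beta)\in\mathbb{R}^d\times\Delta^{n-1}$ is $(\epsilon_0,\epsilon)$-preference stationary if $\|\nabla f_{\hat\beta}(\hat x)\|_2\le\epsilon$ and, for some $x\in\mathbb{R}^d$ and $\alpha\in(0,1)$: (1) $-\nabla f_0(x)^\top\widehat{\nabla}x^*(x,\hat\beta)(\beta'-\hat\beta)\le\alpha\cdot\epsilon_0\|\beta'-\hat\beta\|_1$ for all $\beta'\in\Delta^{n-1}$; and (2) $\mathrm{err}_{\nabla f_0}(x,\hat\beta)\le(1-\alpha)\cdot\epsilon_0$.
   Context: Assumption A1: each $f_i:\mathbb{R}^d\to\mathbb{R}$ is twice differentiable with $\mu\mathbf{I}\preceq\nabla^2 f_i\preceq L\mathbf{I}$, $0<\mu\le L$, $\kappa:=L/\mu$. Assumption A2: each $\nabla^2 f_i$ is $L_H$-Lipschitz. Assumption A3: $f_0:\mathbb{R}^d\to\mathbb{R}$ has $L_0$-Lipschitz gradient. $F=(f_1,\dots,f_n)$, $\nabla F(x)\in\mathbb{R}^{n\times d}$ its Jacobian, $f_\beta=\sum_i\beta_if_i$ for $\beta\in\Delta^{n-1}$ (simplex), $x^*(\beta)=x_\beta=\operatorname{argmin}_xf_\beta(x)$, $\nabla x^*(\beta)=-\nabla^2f_\beta(x_\beta)^{-1}\nabla F(x_\beta)^\top$, $\widehat{\nabla}x^*(x,\beta):=-\nabla^2f_\beta(x)^{-1}\nabla F(x)^\top$.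 $R$ is the $\ell_2$-diameter of the Pareto set of $F$, $M_0:=\kappa R$, $M_1:=2\kappa^2R(1+L_HR/\mu)$, and $\mathrm{err}_{\nabla f_0}(x,\beta):=\frac{1}{\mu}\big(\frac{M_1}{2M_0}\|\nabla f_0(x)\|_2+L_0M_0\big)\|\nabla f_\beta(x)\|_2$. A point $(x,\beta)$ is $(\epsilon_0,\epsilon)$-preference stationary if $-\nabla f_0(x_\beta)^\top\nabla x^*(\beta)(\beta'-\beta)\le\epsilon_0\|\beta'-\beta\|_1$ for all $\beta'\in\Delta^{n-1}$ and $\|\nabla f_\beta(x)\|_2\le\epsilon$. *)

From HB Require Import structures.
From mathcomp Require Import all_boot all_order all_algebra.
From mathcomp Require Import all_classical all_reals all_analysis.
Set Implicit Arguments. Unset Strict Implicit. Unset Printing Implicit Defensive.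
Import Order.TTheory GRing.Theory Num.Theory.
Import numFieldNormedType.Exports.
Local Open Scope classical_set_scope.
Local Open Scope ring_scope.

Section Defs.
Variable R : realType.

Definition dotv (d : nat) (u v : 'cV[R]_d) : R := \sum_(j < d) u j 0 * v j 0.
Definition norm2 (d : nat) (u : 'cV[R]_d) : R := Num.sqrt (dotv u u).
Definition norm1 (d : nat) (u : 'cV[R]_d) : R := \sum_(j < d) `|u j 0|.

Definition simplex (n : nat) : set 'cV[R]_n :=
  [set b | (forall i, 0 <= b i 0) /\ \sum_(i < n) b i 0 = 1].

Definition is_gradient (d : nat) (f : 'cV[R]_d -> R) (g : 'cV[R]_d -> 'cV[R]_d) :=
  forall x, differentiable f x /\ forall v, 'd f x v = dotv (g x) v.

Definition is_jacobian (d : nat) (g : 'cV[R]_d -> 'cV[R]_d) (H : 'cV[R]_d -> 'M[R]_d) :=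
  forall x, differentiable g x /\ forall v, 'd g x v = H x *m v.

Definition loewner_between (d : nat) (mu L : R) (A : 'M[R]_d) :=
  forall v : 'cV[R]_d, mu * dotv v v <= dotv v (A *m v) /\ dotv v (A *m v) <= L * dotv v v.

(* Lipschitz continuity of a matrix valued map w.r.t. the spectral (l2 operator) norm *)
Definition mx_lipschitz (d : nat) (LH : R) (H : 'cV[R]_d -> 'M[R]_d) :=
  forall x y (v : 'cV[R]_d), norm2 ((H x - H y) *m v) <= LH * norm2 (x - y) * norm2 v.

Definition vec_lipschitz (d : nat) (L0 : R) (g : 'cV[R]_d -> 'cV[R]_d) :=
  forall x y, norm2 (g x - g y) <= L0 * norm2 (x - y).

Variables (n d : nat) (F : 'I_n -> 'cV[R]_d -> R)
  (gF : 'I_n -> 'cV[R]_d -> 'cV[R]_d) (HF : 'I_n -> 'cV[R]_d -> 'M[R]_d).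

Definition fbeta (b : 'cV[R]_n) (x : 'cV[R]_d) : R := \sum_(i < n) b i 0 * F i x.
Definition grad_fbeta (b : 'cV[R]_n) (x : 'cV[R]_d) : 'cV[R]_d := \sum_(i < n) b i 0 *: gF i x.
Definition hess_fbeta (b : 'cV[R]_n) (x : 'cV[R]_d) : 'M[R]_d := \sum_(i < n) b i 0 *: HF i x.

Definition jacF (x : 'cV[R]_d) : 'M[R]_(n, d) := \matrix_(i < n, j < d) gF i x j 0.

(* x^*(beta) = argmin_x f_beta(x) (chosen by choice; unique under A1) *)
Definition xstar (b : 'cV[R]_n) : 'cV[R]_d :=
  xget 0 [set x | forall y, fbeta b x <= fbeta b y].

Definition hat_dxstar (x : 'cV[R]_d) (b : 'cV[R]_n) : 'M[R]_(d, n) :=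
  - (invmx (hess_fbeta b x) *m (jacF x)^T).

Definition dxstar (b : 'cV[R]_n) : 'M[R]_(d, n) := hat_dxstar (xstar b) b.

Definition pareto_set : set 'cV[R]_d :=
  [set x | ~ exists y, (forall i, F i y <= F i x) /\ (exists i, F i y < F i x)].

Definition l2_diam (A : set 'cV[R]_d) : R :=
  sup [set norm2 (x - y) | x in A & y in A].

Definition pref_stationary (g0 : 'cV[R]_d -> 'cV[R]_d) (eps0 eps : R)
    (x : 'cV[R]_d) (b : 'cV[R]_n) :=
  (forall b', simplex b' ->
     - ((g0 (xstar b))^T *m dxstar b *m (b' - b)) 0 0 <= eps0 * norm1 (b' - b))
  /\ norm2 (grad_fbeta b x) <= eps.

Definition err_grad_f0 (mu L LH L0 : R) (g0 : 'cV[R]_d -> 'cV[R]_d)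
    (x : 'cV[R]_d) (b : 'cV[R]_n) : R :=
  let kappa := L / mu in
  let Rd := l2_diam pareto_set in
  let M0 := kappa * Rd in
  let M1 := 2 * kappa ^+ 2 * Rd * (1 + LH * Rd / mu) in
  mu^-1 * (M1 / (2 * M0) * norm2 (g0 x) + L0 * M0) * norm2 (grad_fbeta b x).

End Defs.

From HB Require Import structures.
From mathcomp Require Import all_boot all_order all_algebra.
From mathcomp Require Import all_classical all_reals all_analysis.
From mathcomp Require Import ring lra.
Import Order.TTheory GRing.Theory Num.Theory.
Import numFieldNormedType.Exports.
Local Open Scope classical_set_scope.
Local Open Scope ring_scope.

(* Write [v = b' - b] and [S_b(y) = nabla^2 f_b(y)^-1 nabla F(y)^T], so that
   [S_b(y) v = sens b y v].  Hypothesis (1) bounds [<nabla f0(x), S_b(x) v>]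
   and the claim is the same bound at [x_b].  Strong convexity gives [|x - x_b| <= |nabla f_b(x)| / mu]
   and [|nabla^2 f_b^-1| <= 1 / mu].  Both [x_b] and the minimiser of each
   [f_i] are Pareto optimal, so [|nabla f_i(x_b)| <= L R]; hence
   [|S_b(x_b) v| <= |v|_1 L R / mu], and the Lipschitz continuity of the
   gradients and Hessians gives
   [|S_b(x_b) v - S_b(x) v| <= |v|_1 kappa (1 + L_H R / mu) |x - x_b|].
   Splitting [<nabla f0(x_b), S_b(x_b) v> - <nabla f0(x), S_b(x) v>] along
   these two bounds leaves at most [err(x, b) |v|_1 <= (1 - alpha) eps0 |v|_1]. *)

Set Implicit Arguments. Unset Strict Implicit.

Section Euclid.
Variables (R : realType) (d : nat).
Implicit Types (u v w : 'cV[R]_d).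

Lemma dotvC u v : dotv u v = dotv v u.
Proof. by apply: eq_bigr => j _; rewrite mulrC. Qed.

Lemma dotvDl u v w : dotv (u + v) w = dotv u w + dotv v w.
Proof. by rewrite /dotv -big_split; apply: eq_bigr => j _; rewrite mxE mulrDl. Qed.

Lemma dotvDr w u v : dotv w (u + v) = dotv w u + dotv w v.
Proof. by rewrite dotvC dotvDl !(dotvC w). Qed.

Lemma dotvZl (a : R) u v : dotv (a *: u) v = a * dotv u v.
Proof. by rewrite /dotv mulr_sumr; apply: eq_bigr => j _; rewrite mxE mulrA. Qed.

Lemma dotvZr (a : R) u v : dotv u (a *: v) = a * dotv u v.
Proof. by rewrite dotvC dotvZl dotvC. Qed.

Lemma dotvNl u v : dotv (- u) v = - dotv u v.
Proof. by rewrite -scaleN1r dotvZl mulN1r. Qed.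

Lemma dotvNr u v : dotv u (- v) = - dotv u v.
Proof. by rewrite dotvC dotvNl dotvC. Qed.

Lemma dotvBl u v w : dotv (u - v) w = dotv u w - dotv v w.
Proof. by rewrite dotvDl dotvNl. Qed.

Lemma dotvBr w u v : dotv w (u - v) = dotv w u - dotv w v.
Proof. by rewrite dotvDr dotvNr. Qed.

Lemma dotv0l v : dotv 0 v = 0.
Proof. by rewrite /dotv big1 // => j _; rewrite mxE mul0r. Qed.

Lemma dotv0r v : dotv v 0 = 0.
Proof. by rewrite dotvC dotv0l. Qed.

Lemma dotv_sumr (I : Type) (r : seq I) (P : pred I) (G : I -> 'cV[R]_d) v :
  dotv v (\sum_(i <- r | P i) G i) = \sum_(i <- r | P i) dotv v (G i).
Proof. exact: (big_morph _ (dotvDr v) (dotv0r v)). Qed.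

Lemma dotv_suml (I : Type) (r : seq I) (P : pred I) (G : I -> 'cV[R]_d) v :
  dotv (\sum_(i <- r | P i) G i) v = \sum_(i <- r | P i) dotv (G i) v.
Proof. by rewrite dotvC dotv_sumr; apply: eq_bigr => i _; rewrite dotvC. Qed.

Lemma mulmx_trmx_dotv n (g : 'cV[R]_d) (M : 'M[R]_(d, n)) (v : 'cV[R]_n) :
  (g^T *m M *m v) 0 0 = dotv g (M *m v).
Proof. by rewrite -mulmxA mxE /dotv; apply: eq_bigr => j _; rewrite mxE. Qed.

Lemma dotv_ge0 u : 0 <= dotv u u.
Proof. by apply: sumr_ge0 => j _; rewrite -expr2 sqr_ge0. Qed.

Lemma dotv_eq0 u : dotv u u = 0 -> u = 0.
Proof.
move=> /eqP; rewrite psumr_eq0 => [/allP u0|j _]; last by rewrite -expr2 sqr_ge0.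
apply/matrixP => i j; rewrite mxE ord1; have := u0 i (mem_index_enum _).
by rewrite -expr2 sqrf_eq0 => /eqP.
Qed.

Lemma dotv_le0 u : dotv u u <= 0 -> u = 0.
Proof. by move=> u_le0; apply: dotv_eq0; apply/eqP; rewrite eq_le u_le0 dotv_ge0. Qed.

Lemma norm2_ge0 u : 0 <= norm2 u.
Proof. exact: sqrtr_ge0. Qed.

Lemma sqr_norm2 u : norm2 u ^+ 2 = dotv u u.
Proof. by rewrite /norm2 sqr_sqrtr // dotv_ge0. Qed.

Lemma norm2_eq0 u : norm2 u = 0 -> u = 0.
Proof. by move=> u0; apply: dotv_eq0; rewrite -sqr_norm2 u0 expr0n. Qed.

Lemma norm2_0 : norm2 (0 : 'cV[R]_d) = 0.
Proof. by rewrite /norm2 dotv0l sqrtr0. Qed.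

Lemma norm2_sub_gt0 u v : u != v -> 0 < norm2 (u - v).
Proof.
move=> uv; rewrite lt0r norm2_ge0 andbT.
by apply: contra uv => /eqP/norm2_eq0/eqP; rewrite subr_eq0.
Qed.

Lemma norm2Z (a : R) u : norm2 (a *: u) = `|a| * norm2 u.
Proof.
by rewrite /norm2 dotvZl dotvZr mulrA -expr2 sqrtrM ?sqr_ge0 // sqrtr_sqr.
Qed.

Lemma norm2N u : norm2 (- u) = norm2 u.
Proof. by rewrite -scaleN1r norm2Z normrN normr1 mul1r. Qed.

Lemma norm2_distC u v : norm2 (u - v) = norm2 (v - u).
Proof. by rewrite -norm2N opprB. Qed.

Lemma cauchy_schwarz u v : `|dotv u v| <= norm2 u * norm2 v.
Proof.
have sq : dotv u v ^+ 2 <= dotv u u * dotv v v.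
  have [v0|vn0] := eqVneq (dotv v v) 0.
    by rewrite (dotv_eq0 v0) !dotv0r expr0n mulr0.
  have v_gt0 : 0 < dotv v v by rewrite lt0r vn0 dotv_ge0.
  have := dotv_ge0 (dotv v v *: u - dotv u v *: v).
  rewrite !(dotvBl, dotvBr, dotvZl, dotvZr) (dotvC v u) expr2.
  nra.
by rewrite -sqrtr_sqr /norm2 -sqrtrM ?dotv_ge0 // ler_sqrt // mulr_ge0 ?dotv_ge0.
Qed.

Lemma ler_dotv u v : dotv u v <= norm2 u * norm2 v.
Proof. exact: le_trans (ler_norm _) (cauchy_schwarz u v). Qed.

Lemma ler_norm2D u v : norm2 (u + v) <= norm2 u + norm2 v.
Proof.
have sq : norm2 (u + v) ^+ 2 <= (norm2 u + norm2 v) ^+ 2.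
  rewrite sqrrD !sqr_norm2 dotvDl !dotvDr (dotvC v u).
  have := ler_dotv u v; lra.
have := norm2_ge0 (u + v); have := norm2_ge0 u; have := norm2_ge0 v.
rewrite !expr2 in sq; nra.
Qed.

Lemma ler_norm2_sum (I : Type) (r : seq I) (P : pred I) (G : I -> 'cV[R]_d) :
  norm2 (\sum_(i <- r | P i) G i) <= \sum_(i <- r | P i) norm2 (G i).
Proof.
apply: (big_ind2 (fun u b => norm2 u <= b)); first by rewrite norm2_0.
  by move=> u1 u2 b1 b2 le1 le2; apply: le_trans (ler_norm2D _ _) (lerD le1 le2).
by [].
Qed.

Lemma norm1_ge0 n (v : 'cV[R]_n) : 0 <= norm1 v.
Proof. by apply: sumr_ge0 => i _; exact: normr_ge0. Qed.

Lemma ler_norm2_comb n (v : 'cV[R]_n) (W : 'I_n -> 'cV[R]_d) (B : R) :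
  (forall i, norm2 (W i) <= B) -> norm2 (\sum_i v i 0 *: W i) <= norm1 v * B.
Proof.
move=> W_le; apply: le_trans (ler_norm2_sum _ _ _) _.
rewrite /norm1 mulr_suml; apply: ler_sum => i _; rewrite norm2Z.
by apply: ler_wpM2l => //; exact: normr_ge0.
Qed.

Lemma norm2_le_div_of_dotv (k : R) u v :
  0 < k -> k * dotv u u <= dotv u v -> norm2 u <= norm2 v / k.
Proof.
move=> k_gt0 le_uv; rewrite ler_pdivlMr //.
have {le_uv} : k * norm2 u ^+ 2 <= norm2 u * norm2 v.
  by rewrite sqr_norm2; exact: le_trans le_uv (ler_dotv u v).
have := norm2_ge0 v; have [->|u0] := eqVneq (norm2 u) 0.
  by rewrite !mul0r => v_ge0 _.
have : 0 < norm2 u by rewrite lt0r u0 norm2_ge0.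
rewrite expr2; nra.
Qed.

Lemma entry_le_norm2 u (j : 'I_d) : `|u j 0| <= norm2 u.
Proof.
rewrite -sqrtr_sqr /norm2 ler_wsqrtr //.
rewrite /dotv (bigD1 j) //= -expr2 lerDl; apply: sumr_ge0 => k _.
by rewrite -expr2 sqr_ge0.
Qed.

Lemma mx_norm_trmx_le u : `|u^T| <= norm2 u.
Proof.
rewrite [leLHS]/Num.Def.normr /= mx_normrE; apply: bigmax_le; first exact: norm2_ge0.
by move=> [i j] _ /=; rewrite mxE (ord1 i); exact: entry_le_norm2.
Qed.

Lemma vec_lipschitz_ge0 (K : R) (g : 'cV[R]_d -> 'cV[R]_d) u v :
  vec_lipschitz K g -> u != v -> 0 <= K.
Proof.
move=> g_lip uv; rewrite -(pmulr_lge0 _ (norm2_sub_gt0 uv)).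
exact: le_trans (norm2_ge0 _) (g_lip u v).
Qed.

Lemma mx_lipschitz_ge0 (K : R) (H : 'cV[R]_d -> 'M[R]_d) u v :
  mx_lipschitz K H -> u != v -> 0 <= K.
Proof.
move=> H_lip uv; have uv_gt0 := norm2_sub_gt0 uv.
rewrite -(pmulr_lge0 _ uv_gt0) -(pmulr_lge0 _ uv_gt0).
exact: le_trans (norm2_ge0 _) (H_lip u v (u - v)).
Qed.

End Euclid.

Section PosDefMx.
Variables (R : realType) (d : nat) (mu : R) (A : 'M[R]_d).
Hypotheses (mu_gt0 : 0 < mu) (A_ge : forall v, mu * dotv v v <= dotv v (A *m v)).

Lemma posdef_unitmx : A \in unitmx.
Proof.
rewrite unitmxE unitfE -det_tr; apply/negP => /det0P[r /negP r_neq0 rA].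
apply: r_neq0; have Ar : A *m r^T = 0 by rewrite -[A]trmxK -trmx_mul rA trmx0.
have := A_ge r^T; rewrite Ar dotv0r pmulr_rle0 // => /dotv_le0 r0.
by rewrite -[r]trmxK r0 trmx0.
Qed.

Lemma norm2_invmx_mul_le w : norm2 (invmx A *m w) <= norm2 w / mu.
Proof.
apply: norm2_le_div_of_dotv => //.
by have := A_ge (invmx A *m w); rewrite mulKVmx // posdef_unitmx.
Qed.

End PosDefMx.

Section Calculus.
Variable R : realType.

Lemma diff_comb (V W : normedModType R) n (c : 'I_n -> R) (h : 'I_n -> V -> W) x :
  (forall i, differentiable (h i) x) ->
  differentiable (fun y => \sum_i c i *: h i y) x /\
  forall v, 'd (fun y => \sum_i c i *: h i y) x v = \sum_i c i *: 'd (h i) x v.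
Proof.
move=> dh; have -> : (fun y => \sum_i c i *: h i y) = \sum_i c i *: h i.
  by apply/funext => y; rewrite fct_sumE.
have dch i : differentiable (c i *: h i) x by exact: differentiableZ.
split=> [|v]; first exact: differentiable_sum.
rewrite -deriveE; last exact: differentiable_sum.
rewrite derive_sum => [|i]; last exact: diff_derivable.
by apply: eq_bigr => i _; rewrite deriveE // diffZ.
Qed.

Lemma is_derive_along (V : normedModType R) (f : V -> R) (a v : V) (t : R) :
  differentiable f (t *: v + a) ->
  is_derive t 1 (fun s => f (s *: v + a)) ('d f (t *: v + a) v).
Proof.
move=> df.
have E : (fun h : R => h^-1 *: (((fun s => f (s *: v + a)) \o shift t) (h *: 1)
            - f (t *: v + a))) =
         (fun h : R => h^-1 *: ((f \o shift (t *: v + a)) (h *: v) - f (t *: v + a))).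
  apply/funext => h /=; congr (_ *: (f _ - _)).
  by rewrite [h *: 1]mulr1 scalerDl addrA.
apply: DeriveDef; first by rewrite /derivable E; exact: diff_derivable.
by rewrite /derive E -deriveE.
Qed.

Variable d : nat.

Lemma continuous_trmx : continuous (fun r : 'rV[R]_d => r^T).
Proof.
move=> u A /nbhs_ballP[e /= e_gt0 eA]; apply/nbhs_ballP.
exists e => //= v [_ uv]; apply: eA; split => // i j.
by apply: le_lt_trans (uv j i); rewrite !mxE.
Qed.

Lemma differentiable_dotv (v : 'cV[R]_d) z :
  differentiable (fun u : 'cV[R]_d => dotv u v) z.
Proof.
rewrite (_ : (fun u => dotv u v) = \sum_(j < d) (fun u : 'cV[R]_d => u j 0 * v j 0)).
  apply: differentiable_sum => j.
  apply: (@differentiableM _ _ (fun u : 'cV[R]_d => u j 0) (cst (v j 0))).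
    exact: differentiable_coord.
  exact: differentiable_cst.
by rewrite fct_sumE.
Qed.

Lemma diff_dotv (v : 'cV[R]_d) z w : 'd (fun u : 'cV[R]_d => dotv u v) z w = dotv w v.
Proof.
have lin : linear (fun u : 'cV[R]_d => dotv u v).
  by move=> a u u'; rewrite dotvDl dotvZl.
pose l : {linear 'cV[R]_d -> R} :=
  HB.pack (fun u : 'cV[R]_d => dotv u v) (GRing.isLinear.Build _ _ _ _ _ lin).
rewrite (diff_lin (f := l)) // => y.
exact: differentiable_continuous (differentiable_dotv v y).
Qed.

End Calculus.

Section SecondOrder.
Variable R : realType.

Lemma le_is_derive_ge0 (k dk : R -> R) (a b : R) :
  (forall t : R, is_derive t (1 : R) k (dk t)) ->
  (forall t, a < t < b -> 0 <= dk t) ->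
  a <= b -> k a <= k b.
Proof.
move=> k_deriv dk_ge0; rewrite le_eqVlt => /predU1P[->//|ab].
have k_cont : {within `[a, b], continuous k}.
  by apply: derivable_within_continuous => x _; have [] := k_deriv x.
rewrite -subr_ge0; have [c cab ->] := MVT ab (fun x _ => k_deriv x) k_cont.
apply: mulr_ge0; last by rewrite subr_ge0 ltW.
by apply: dk_ge0; move: cab; rewrite in_itv.
Qed.

Lemma taylor2_ge (p p1 p2 : R -> R) (a : R) :
  (forall t : R, is_derive t (1 : R) p (p1 t)) ->
  (forall t : R, is_derive t (1 : R) p1 (p2 t)) ->
  (forall t, a <= p2 t) -> a / 2 <= p 1 - p 0 - p1 0.
Proof.
move=> p_deriv p1_deriv a_le.
pose k1 t := p1 t - p1 0 - a * t.
have k1_deriv (t : R) : is_derive t (1 : R) k1 (p2 t - a).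
  have -> : k1 = p1 - cst (p1 0) - ( *%R a) by apply/funext => s.
  by apply: is_derive_eq; rewrite subr0 [_%:A]mulr1.
have k1_ge0 t : 0 <= t -> 0 <= k1 t.
  move=> t_ge0; rewrite (_ : 0 = k1 0); last by rewrite /k1 mulr0 !subrr.
  by apply: le_is_derive_ge0 k1_deriv _ t_ge0 => s _; rewrite subr_ge0.
pose k t := p t - p 0 - t * p1 0 - a / 2 * (t * t).
have k_deriv (t : R) : is_derive t (1 : R) k (k1 t).
  have -> : k = p - cst (p 0) - ( *%R^~ (p1 0)) - (( *%R (a / 2)) \o (id * id)).
    by apply/funext => s.
  apply: is_derive_eq.
  change (p1 t - 0 - (t * 0 + p1 0 * 1) - (a / 2) * (t * 1 + t * 1) = k1 t).
  by rewrite /k1; field.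
have := le_is_derive_ge0 k_deriv (fun t t01 => k1_ge0 t (ltW (andP t01).1)) ler01.
rewrite /k !mul0r !mul1r subrr !subr0 mulr0 subr0 mulr1; lra.
Qed.

Lemma taylor2_le (p p1 p2 : R -> R) (b : R) :
  (forall t : R, is_derive t (1 : R) p (p1 t)) ->
  (forall t : R, is_derive t (1 : R) p1 (p2 t)) ->
  (forall t, p2 t <= b) -> p 1 - p 0 - p1 0 <= b / 2.
Proof.
move=> p_deriv p1_deriv le_b.
have Np_deriv (t : R) : is_derive t (1 : R) (- p) (- p1 t) by exact: is_deriveN.
have Np1_deriv (t : R) : is_derive t (1 : R) (- p1) (- p2 t) by exact: is_deriveN.
have le_Nb (t : R) : - b <= - p2 t by rewrite lerN2.
have : - b / 2 <= - p 1 - - p 0 - - p1 0 := taylor2_ge Np_deriv Np1_deriv le_Nb.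
lra.
Qed.

End SecondOrder.

Section StronglyConvex.
Variables (R : realType) (d : nat) (f : 'cV[R]_d -> R) (g : 'cV[R]_d -> 'cV[R]_d)
  (H : 'cV[R]_d -> 'M[R]_d) (mu L : R).
Hypotheses (hg : is_gradient f g) (hH : is_jacobian g H)
  (hl : forall x, loewner_between mu L (H x)).
Hypotheses (mu_gt0 : 0 < mu) (muL : mu <= L).
Implicit Types x y : 'cV[R]_d.

Let L_gt0 : 0 < L. Proof. exact: lt_le_trans mu_gt0 muL. Qed.

Lemma diff_dotv_grad v z :
  differentiable (fun u => dotv (g u) v) z /\
  'd (fun u => dotv (g u) v) z v = dotv (H z *m v) v.
Proof.
have -> : (fun u => dotv (g u) v) = (fun u => dotv u v) \o g by [].
have [dg dgE] := hH z.
split; first by apply: differentiable_comp => //; exact: differentiable_dotv.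
by rewrite diff_comp //= ?diff_dotv ?dgE //; exact: differentiable_dotv.
Qed.

Lemma quad_bounds x y :
  mu * dotv (y - x) (y - x) / 2 <= f y - f x - dotv (g x) (y - x) /\
  f y - f x - dotv (g x) (y - x) <= L * dotv (y - x) (y - x) / 2.
Proof.
set v := y - x.
pose p s := f (s *: v + x).
pose p1 s := dotv (g (s *: v + x)) v.
pose p2 s := dotv (H (s *: v + x) *m v) v.
have p_deriv (t : R) : is_derive t (1 : R) p (p1 t).
  by have [df dfE] := hg (t *: v + x); rewrite /p1 -dfE; exact: is_derive_along.
have p1_deriv (t : R) : is_derive t (1 : R) p1 (p2 t).
  have [df dfE] := diff_dotv_grad v (t *: v + x).
  by rewrite /p2 -dfE; exact: is_derive_along.
have p1E : p 1 = f y by rewrite /p scale1r /v subrK.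
have p0E : p 0 = f x by rewrite /p scale0r add0r.
have p10E : p1 0 = dotv (g x) v by rewrite /p1 scale0r add0r.
rewrite -p1E -p0E -p10E; split.
  apply: (taylor2_ge p_deriv p1_deriv) => t.
  by rewrite /p2 dotvC; case: (hl (t *: v + x) v).
apply: (taylor2_le p_deriv p1_deriv) => t.
by rewrite /p2 dotvC; case: (hl (t *: v + x) v).
Qed.

Lemma grad_strong_monotone x y :
  mu * dotv (x - y) (x - y) <= dotv (g x - g y) (x - y).
Proof.
have [lb_xy _] := quad_bounds x y; have [lb_yx _] := quad_bounds y x.
have dE : dotv (y - x) (y - x) = dotv (x - y) (x - y).
  by rewrite -opprB dotvNl dotvNr opprK.
rewrite dE -(opprB x y) dotvNr in lb_xy.
rewrite (dotvBl (g x)); lra.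
Qed.

Lemma cocoercive x y :
  L^-1 * dotv (g y - g x) (g y - g x) / 2 <= f y - f x - dotv (g x) (y - x).
Proof.
set w := g y - g x; set z := y - L^-1 *: w.
have [lb _] := quad_bounds x z; have [_ ub] := quad_bounds y z.
have zy : z - y = - (L^-1 *: w) by rewrite /z addrAC subrr add0r.
have zx : z - x = (y - x) - L^-1 *: w by rewrite /z addrAC.
have gzx : dotv (g x) (z - x) = dotv (g x) (y - x) - L^-1 * dotv (g x) w.
  by rewrite zx (dotvBr _ (y - x)) dotvZr.
rewrite zy !(dotvNl, dotvNr, dotvZl, dotvZr) !opprK (mulVKf (lt0r_neq0 L_gt0)) in ub.
rewrite gzx in lb.
have wE : L^-1 * dotv (g y) w - L^-1 * dotv (g x) w = L^-1 * dotv w w.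
  by rewrite -mulrBr -dotvBl.
have : 0 <= mu * dotv (z - x) (z - x) / 2.
  by rewrite divr_ge0 // mulr_ge0 ?dotv_ge0 // ltW.
lra.
Qed.

Lemma grad_lipschitz x y : norm2 (g x - g y) <= L * norm2 (x - y).
Proof.
rewrite -[L]invrK mulrC; apply: norm2_le_div_of_dotv; first by rewrite invr_gt0.
have h1 := cocoercive y x; have h2 := cocoercive x y.
have wE : dotv (g y - g x) (g y - g x) = dotv (g x - g y) (g x - g y).
  by rewrite -opprB dotvNl dotvNr opprK.
rewrite wE -(opprB x y) dotvNr in h2.
rewrite (dotvBl (g x) (g y) (x - y)); lra.
Qed.

Lemma lt_origin_far y : 2 * norm2 (g 0) / mu < norm2 y -> f 0 < f y.
Proof.
move=> far; have [lb _] := quad_bounds 0 y; rewrite !subr0 -sqr_norm2 in lb.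
have cs := ler_dotv (g 0) (- y); rewrite dotvNr norm2N in cs.
have G_ge0 := norm2_ge0 (g 0).
have N_gt0 : 0 < norm2 y.
  by apply: le_lt_trans far; rewrite divr_ge0 ?mulr_ge0 // ltW.
rewrite ltr_pdivrMr // in far.
rewrite expr2 in lb; nra.
Qed.

Lemma exists_argmin : exists m, forall y, f m <= f y.
Proof.
set M := 2 * norm2 (g 0) / mu + 1.
have M_gt0 : 0 < M by rewrite ltr_wpDl // divr_ge0 ?mulr_ge0 ?norm2_ge0 // ltW.
(* The extreme value theorem of the library is stated for row vectors. *)
pose B := closed_ball (0 : 'rV[R]_d) M.
have inB r : B r = (`|r| <= M).
  by rewrite /B closed_ballE // /closed_ball_ /= sub0r normrN.
have B0 : B 0 by exact: closed_ballxx.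
have B_compact : compact B.
  apply: bounded_closed_compact; last exact: closed_ball_closed.
  exists M; split; first exact: num_real.
  by move=> N MN r; rewrite inB => rM; exact: le_trans rM (ltW MN).
have f_cont : {within B, continuous (f \o trmx)}.
  apply: continuous_subspaceT => r; apply: continuous_comp.
    exact: continuous_trmx.
  exact/differentiable_continuous/(proj1 (hg _)).
have [c cB c_min] := EVT_min_rV (ex_intro _ 0 B0) B_compact f_cont.
exists c^T => y; have fc0 : f c^T <= f 0.
  by have := c_min 0; rewrite inE /= trmx0 => /(_ B0).
have [yB|yNB] := pselect (B y^T).
  by have := c_min y^T; rewrite inE /= trmxK => /(_ yB).
have yM : M < `|y^T| by rewrite ltNge; apply/negP; rewrite -inB.
apply/(le_trans fc0)/ltW/lt_origin_far.
apply: (lt_le_trans _ (mx_norm_trmx_le y)); apply: lt_trans yM.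
by rewrite /M ltrDl.
Qed.

Section Argmin.
Variable m : 'cV[R]_d.
Hypothesis m_min : forall y, f m <= f y.

Lemma grad_argmin : g m = 0.
Proof.
set w := g m; have [_ ub] := quad_bounds m (m - L^-1 *: w).
have zm : m - L^-1 *: w - m = - (L^-1 *: w) by rewrite addrAC subrr add0r.
rewrite zm -/w !(dotvNl, dotvNr, dotvZl, dotvZr) !opprK in ub.
rewrite (mulVKf (lt0r_neq0 L_gt0)) in ub.
have fm := m_min (m - L^-1 *: w).
have : L^-1 * dotv w w <= 0 by lra.
by rewrite pmulr_rle0 ?invr_gt0 // => /dotv_le0.
Qed.

Lemma argmin_uniq y : f y <= f m -> y = m.
Proof.
move=> le_ym; have [lb _] := quad_bounds m y.
rewrite grad_argmin dotv0l subr0 in lb.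
have : mu * dotv (y - m) (y - m) <= 0 by lra.
by rewrite pmulr_rle0 // => /dotv_le0/eqP; rewrite subr_eq0 => /eqP.
Qed.

Lemma norm2_sub_argmin_le x : norm2 (x - m) <= norm2 (g x) / mu.
Proof.
apply: norm2_le_div_of_dotv => //.
by have := grad_strong_monotone x m; rewrite grad_argmin subr0 dotvC.
Qed.

End Argmin.
End StronglyConvex.

Section Hypergradient.
Variables (R : realType) (n d : nat) (F : 'I_n -> 'cV[R]_d -> R)
  (gF : 'I_n -> 'cV[R]_d -> 'cV[R]_d) (HF : 'I_n -> 'cV[R]_d -> 'M[R]_d)
  (mu L LH : R).
Hypotheses (mu_gt0 : 0 < mu) (muL : mu <= L)
  (hg : forall i, is_gradient (F i) (gF i))
  (hH : forall i, is_jacobian (gF i) (HF i))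
  (hl : forall i x, loewner_between mu L (HF i x))
  (hLH : forall i, mx_lipschitz LH (HF i)).

Local Notation fb := (fbeta F).
Local Notation gb := (grad_fbeta gF).
Local Notation Hb := (hess_fbeta HF).
Local Notation xb := (xstar F).
Local Notation Rd := (l2_diam (pareto_set F)).
Implicit Types (b : 'cV[R]_n) (x y : 'cV[R]_d).

Let L_gt0 : 0 < L. Proof. exact: lt_le_trans mu_gt0 muL. Qed.

Lemma simplex_pos_coord b : simplex b -> exists i, 0 < b i 0.
Proof.
move=> [b_ge0 b_sum]; have [i /andP[_ bi]] : exists i, true && (0 < b i 0).
  apply: psumr_neq0P => [i _|]; first exact: b_ge0.
  by rewrite b_sum; exact/eqP/oner_neq0.
by exists i.
Qed.

Lemma simplex_combE b (c : R) : simplex b -> \sum_i b i 0 * c = c.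
Proof. by move=> [_ b_sum]; rewrite -mulr_suml b_sum mul1r. Qed.

Lemma ler_simplex_comb b (a a' : 'I_n -> R) :
  simplex b -> (forall i, a i <= a' i) -> \sum_i b i 0 * a i <= \sum_i b i 0 * a' i.
Proof. by move=> [b_ge0 _] le_a; apply: ler_sum => i _; exact: ler_wpM2l. Qed.

Lemma hess_fbeta_mul b x (v : 'cV[R]_d) : Hb b x *m v = \sum_i b i 0 *: (HF i x *m v).
Proof.
by rewrite /hess_fbeta mulmx_suml; apply: eq_bigr => i _; rewrite -scalemxAl.
Qed.

Lemma is_gradient_fbeta b : is_gradient (fb b) (gb b).
Proof.
move=> x; have [df dfE] :=
  @diff_comb R _ _ n (fun i => b i 0) F x (fun i => proj1 (hg i x)).
split=> [|v]; first exact: df.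
rewrite [LHS]dfE /grad_fbeta dotv_suml; apply: eq_bigr => i _.
by rewrite dotvZl (proj2 (hg i x)).
Qed.

Lemma is_jacobian_grad_fbeta b : is_jacobian (gb b) (Hb b).
Proof.
move=> x; have [dg dgE] :=
  @diff_comb R _ _ n (fun i => b i 0) gF x (fun i => proj1 (hH i x)).
split=> [|v]; first exact: dg.
rewrite [LHS]dgE hess_fbeta_mul; apply: eq_bigr => i _.
by rewrite (proj2 (hH i x)).
Qed.

Lemma loewner_hess_fbeta b : simplex b -> forall x, loewner_between mu L (Hb b x).
Proof.
move=> sb x v; rewrite hess_fbeta_mul dotv_sumr.
under eq_bigr do rewrite dotvZr.
split.
  rewrite -(simplex_combE (mu * dotv v v) sb).
  by apply: ler_simplex_comb => // i; case: (hl i x v).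
rewrite -(simplex_combE (L * dotv v v) sb).
by apply: ler_simplex_comb => // i; case: (hl i x v).
Qed.

Lemma mx_lipschitz_hess_fbeta b : simplex b -> mx_lipschitz LH (Hb b).
Proof.
move=> sb x y v.
have -> : (Hb b x - Hb b y) *m v = \sum_i b i 0 *: ((HF i x - HF i y) *m v).
  rewrite mulmxBl !hess_fbeta_mul -sumrB; apply: eq_bigr => i _.
  by rewrite mulmxBl scalerBr.
apply: le_trans (ler_norm2_sum _ _ _) _.
rewrite -(simplex_combE (LH * norm2 (x - y) * norm2 v) sb).
apply: ler_sum => i _; have [b_ge0 _] := sb.
by rewrite norm2Z ger0_norm //; apply: ler_wpM2l => //; exact: hLH.
Qed.

Lemma xstar_min b : simplex b -> forall y, fb b (xb b) <= fb b y.
Proof.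
move=> sb; exact: (xgetPex 0 (exists_argmin (is_gradient_fbeta b)
  (is_jacobian_grad_fbeta b) (loewner_hess_fbeta sb) mu_gt0)).
Qed.

Lemma grad_fbeta_xstar b : simplex b -> gb b (xb b) = 0.
Proof.
move=> sb; exact: (grad_argmin (is_gradient_fbeta b) (is_jacobian_grad_fbeta b)
  (loewner_hess_fbeta sb) mu_gt0 muL (xstar_min sb)).
Qed.

Lemma norm2_sub_xstar_le b x : simplex b -> norm2 (x - xb b) <= norm2 (gb b x) / mu.
Proof.
move=> sb; exact: (norm2_sub_argmin_le (is_gradient_fbeta b)
  (is_jacobian_grad_fbeta b) (loewner_hess_fbeta sb) mu_gt0 muL (xstar_min sb) x).
Qed.

Lemma pareto_of_unique_min (h : 'cV[R]_d -> R) m :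
  (forall y, (forall i, F i y <= F i m) -> h y <= h m) ->
  (forall y, h y <= h m -> y = m) -> pareto_set F m.
Proof.
move=> h_mono h_uniq [y [le_ym [i]]].
by rewrite (h_uniq y (h_mono y le_ym)) ltxx.
Qed.

Lemma xstar_pareto b : simplex b -> pareto_set F (xb b).
Proof.
move=> sb; apply: (pareto_of_unique_min (h := fb b)).
  by move=> y le_y; exact: ler_simplex_comb.
exact: (argmin_uniq (is_gradient_fbeta b) (is_jacobian_grad_fbeta b)
  (loewner_hess_fbeta sb) mu_gt0 muL (xstar_min sb)).
Qed.

Lemma pareto_set_bounded (i0 : 'I_n) :
  exists C, forall x, pareto_set F x -> norm2 x <= C.
Proof.
exists (\sum_i 2 * norm2 (gF i 0) / mu) => x Px; rewrite leNgt; apply/negP => far.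
have lt_F i : F i 0 < F i x.
  apply/(lt_origin_far (hg i) (hH i) (hl i) mu_gt0)/(le_lt_trans _ far).
  rewrite (bigD1 i) //= lerDl; apply: sumr_ge0 => j _.
  by rewrite divr_ge0 ?mulr_ge0 ?norm2_ge0 // ltW.
by apply: Px; exists 0; split=> [i|]; [exact: ltW | exists i0].
Qed.

Lemma norm2_sub_le_diam (i0 : 'I_n) x y :
  pareto_set F x -> pareto_set F y -> norm2 (x - y) <= Rd.
Proof.
move=> Px Py; have [C HC] := pareto_set_bounded i0.
apply: ub_le_sup; last by exists x => //; exists y.
exists (C + C) => _ [a Pa [c Pc <-]].
by apply: le_trans (ler_norm2D _ _) _; rewrite norm2N lerD ?HC.
Qed.

Lemma norm2_grad_xstar_le b i : simplex b -> norm2 (gF i (xb b)) <= L * Rd.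
Proof.
move=> sb; have [m m_min] := exists_argmin (hg i) (hH i) (hl i) mu_gt0.
have m_pareto : pareto_set F m.
  apply: (pareto_of_unique_min (h := F i)) => [y|]; first by apply.
  exact: (argmin_uniq (hg i) (hH i) (hl i) mu_gt0 muL m_min).
have := grad_lipschitz (hg i) (hH i) (hl i) mu_gt0 muL (xb b) m.
rewrite (grad_argmin (hg i) (hH i) (hl i) mu_gt0 muL m_min) subr0 => /le_trans; apply.
apply: ler_wpM2l; first exact: ltW.
exact: (norm2_sub_le_diam i (xstar_pareto sb) m_pareto).
Qed.

Lemma norm2_invmx_hess_fbeta_le b x w :
  simplex b -> norm2 (invmx (Hb b x) *m w) <= norm2 w / mu.
Proof.
move=> sb; apply: norm2_invmx_mul_le mu_gt0 _ w => v.
by case: (loewner_hess_fbeta sb x v).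
Qed.

Lemma invmx_hess_grad_xstar_le b i : simplex b ->
  norm2 (invmx (Hb b (xb b)) *m gF i (xb b)) <= L * Rd / mu.
Proof.
move=> sb; apply: le_trans (norm2_invmx_hess_fbeta_le _ _ sb) _.
by rewrite ler_pM2r ?invr_gt0 // norm2_grad_xstar_le.
Qed.

Lemma invmx_hess_grad_lipschitz b i x : simplex b -> 0 <= LH ->
  norm2 (invmx (Hb b x) *m gF i x - invmx (Hb b (xb b)) *m gF i (xb b))
    <= L / mu * (1 + LH * Rd / mu) * norm2 (x - xb b).
Proof.
move=> sb LH_ge0; set z := invmx (Hb b (xb b)) *m gF i (xb b).
have unit_H y : Hb b y \in unitmx.
  by apply: (posdef_unitmx mu_gt0) => v; case: (loewner_hess_fbeta sb y v).
have -> : invmx (Hb b x) *m gF i x - z = invmx (Hb b x) *m (gF i x - gF i (xb b))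
    + invmx (Hb b x) *m ((Hb b (xb b) - Hb b x) *m z).
  rewrite -mulmxDr mulmxBl /z mulmxA mulmxV // mul1mx addrA subrK.
  by rewrite mulmxBr mulmxA mulVmx // mul1mx.
have h1 : norm2 (invmx (Hb b x) *m (gF i x - gF i (xb b)))
    <= L * norm2 (x - xb b) / mu.
  apply: le_trans (norm2_invmx_hess_fbeta_le _ _ sb) _.
  by rewrite ler_pM2r ?invr_gt0 // (grad_lipschitz (hg i) (hH i) (hl i) mu_gt0 muL).
have h2 : norm2 (invmx (Hb b x) *m ((Hb b (xb b) - Hb b x) *m z))
    <= LH * norm2 (x - xb b) * (L * Rd / mu) / mu.
  apply: le_trans (norm2_invmx_hess_fbeta_le _ _ sb) _.
  rewrite ler_pM2r ?invr_gt0 //; apply: le_trans (mx_lipschitz_hess_fbeta sb _ _ _) _.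
  rewrite norm2_distC; apply: ler_wpM2l; first by rewrite mulr_ge0 ?norm2_ge0.
  exact: invmx_hess_grad_xstar_le.
suff <- : L * norm2 (x - xb b) / mu + LH * norm2 (x - xb b) * (L * Rd / mu) / mu
    = L / mu * (1 + LH * Rd / mu) * norm2 (x - xb b).
  exact: le_trans (ler_norm2D _ _) (lerD h1 h2).
by field; exact: lt0r_neq0.
Qed.

Definition sens b y (v : 'cV[R]_n) : 'cV[R]_d :=
  \sum_i v i 0 *: (invmx (Hb b y) *m gF i y).

Lemma hat_dxstar_mul b y v : hat_dxstar gF HF y b *m v = - sens b y v.
Proof.
rewrite /hat_dxstar mulNmx -mulmxA; congr (- _).
have -> : (jacF gF y)^T *m v = \sum_i v i 0 *: gF i y.
  apply/matrixP => j k; rewrite !mxE summxE; apply: eq_bigr => i _.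
  by rewrite !mxE (ord1 k) mulrC.
by rewrite mulmx_sumr; apply: eq_bigr => i _; rewrite scalemxAr.
Qed.

Lemma norm2_sens_xstar_le b v : simplex b ->
  norm2 (sens b (xb b) v) <= norm1 v * (L * Rd / mu).
Proof.
by move=> sb; apply: ler_norm2_comb => i; exact: (invmx_hess_grad_xstar_le i sb).
Qed.

Lemma norm2_sens_sub_le b x v : simplex b -> 0 <= LH ->
  norm2 (sens b (xb b) v - sens b x v)
    <= norm1 v * (L / mu * (1 + LH * Rd / mu) * norm2 (x - xb b)).
Proof.
move=> sb LH_ge0; rewrite /sens -sumrB; under eq_bigr do rewrite -scalerBr.
apply: ler_norm2_comb => i; rewrite [leLHS]norm2_distC.
exact: (invmx_hess_grad_lipschitz i x sb LH_ge0).
Qed.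

Lemma err_grad_f0E L0 g0 x b : 0 < Rd ->
  err_grad_f0 F gF mu L LH L0 g0 x b
    = (L / mu * (1 + LH * Rd / mu) * norm2 (g0 x) + L0 * (L / mu * Rd))
      * (norm2 (gb b x) / mu).
Proof.
by move=> Rd_gt0; rewrite /err_grad_f0; set D := l2_diam _; field; rewrite !lt0r_neq0.
Qed.

Lemma err_grad_f0_xstar L0 g0 b :
  simplex b -> err_grad_f0 F gF mu L LH L0 g0 (xb b) b = 0.
Proof. by move=> sb; rewrite /err_grad_f0 grad_fbeta_xstar // norm2_0 mulr0. Qed.

Lemma err_grad_f0_diam0 L0 g0 x b : Rd = 0 -> err_grad_f0 F gF mu L LH L0 g0 x b = 0.
Proof.
by move=> Rd0; rewrite /err_grad_f0 Rd0; cbv zeta; rewrite !(mulr0, mul0r, addr0).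
Qed.

Lemma hypergrad_error g0 (L0 : R) b x v :
  simplex b -> vec_lipschitz L0 g0 -> 0 < Rd ->
  dotv (g0 (xb b)) (sens b (xb b) v) - dotv (g0 x) (sens b x v)
    <= err_grad_f0 F gF mu L LH L0 g0 x b * norm1 v.
Proof.
move=> sb g0_lip Rd_gt0.
(* The signs of [L0] and [LH] are only forced once two distinct points exist. *)
have [->|x_xb] := eqVneq x (xb b).
  by rewrite subrr err_grad_f0_xstar // mul0r.
have [i0 _] := simplex_pos_coord sb.
have L0_ge0 : 0 <= L0 := vec_lipschitz_ge0 g0_lip x_xb.
have LH_ge0 : 0 <= LH := mx_lipschitz_ge0 (hLH i0) x_xb.
rewrite err_grad_f0E //; set K := L / mu * (1 + LH * Rd / mu).
set del := norm2 (x - xb b); set G := norm2 (g0 x).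
have K_ge0 : 0 <= K by rewrite mulr_ge0 ?addr_ge0 ?divr_ge0 ?mulr_ge0 // ltW.
have t1 : dotv (g0 (xb b) - g0 x) (sens b (xb b) v)
    <= L0 * del * (norm1 v * (L * Rd / mu)).
  apply: le_trans (ler_dotv _ _) _; apply: ler_pM; rewrite ?norm2_ge0 //.
    by rewrite norm2_distC; exact: g0_lip.
  exact: norm2_sens_xstar_le.
have t2 : dotv (g0 x) (sens b (xb b) v - sens b x v) <= G * (norm1 v * (K * del)).
  apply: le_trans (ler_dotv _ _) _; apply: ler_wpM2l; first exact: norm2_ge0.
  exact: norm2_sens_sub_le.
have c_ge0 : 0 <= norm1 v * (K * G + L0 * (L / mu * Rd)).
  apply: mulr_ge0; first exact: norm1_ge0.
  apply: addr_ge0; apply: mulr_ge0; rewrite ?norm2_ge0 //.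
  by apply: mulr_ge0; [apply: divr_ge0|]; exact: ltW.
have := ler_wpM2l c_ge0 (norm2_sub_xstar_le x sb); rewrite -/del.
rewrite dotvBl in t1; rewrite dotvBr in t2; lra.
Qed.

Lemma hypergrad_xstar_le g0 (L0 eps0 al : R) b x v :
  simplex b -> vec_lipschitz L0 g0 -> al < 1 ->
  dotv (g0 x) (sens b x v) <= al * eps0 * norm1 v ->
  err_grad_f0 F gF mu L LH L0 g0 x b <= (1 - al) * eps0 ->
  dotv (g0 (xb b)) (sens b (xb b) v) <= eps0 * norm1 v.
Proof.
move=> sb g0_lip al_lt1 est err_le.
have [i0 _] := simplex_pos_coord sb.
have Rd_ge0 : 0 <= Rd.
  have := norm2_sub_le_diam i0 (xstar_pareto sb) (xstar_pareto sb).
  by rewrite subrr norm2_0.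
have v_ge0 := norm1_ge0 v.
have [Rd_gt0|Rd_le0] := ltP 0 Rd.
  have := hypergrad_error x v sb g0_lip Rd_gt0.
  have := ler_wpM2r v_ge0 err_le; lra.
(* For [R = 0] the factor [M1 / (2 M0)] of [err] is [0 / 0 = 0], but then every
   [nabla f_i(x_b)] vanishes. *)
have Rd0 : Rd = 0 by apply/eqP; rewrite eq_le Rd_le0 Rd_ge0.
have -> : sens b (xb b) v = 0.
  apply: norm2_eq0; apply/eqP; rewrite eq_le norm2_ge0 andbT.
  by have := norm2_sens_xstar_le v sb; rewrite Rd0 mulr0 mul0r mulr0.
rewrite dotv0r mulr_ge0 //.
by move: err_le; rewrite err_grad_f0_diam0 // pmulr_rge0 // subr_gt0.
Qed.

End Hypergradient.

Unset Implicit Arguments.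

Theorem lemma5 (R : realType) (n d : nat)
  (F : 'I_n -> 'cV[R]_d -> R) (gF : 'I_n -> 'cV[R]_d -> 'cV[R]_d)
  (HF : 'I_n -> 'cV[R]_d -> 'M[R]_d)
  (f0 : 'cV[R]_d -> R) (g0 : 'cV[R]_d -> 'cV[R]_d)
  (mu L LH L0 eps0 eps : R) :
  (* Assumption A1 *)
  0 < mu -> mu <= L ->
  (forall i, is_gradient (F i) (gF i)) ->
  (forall i, is_jacobian (gF i) (HF i)) ->
  (forall i x, loewner_between mu L (HF i x)) ->
  (* Assumption A2 *)
  (forall i, mx_lipschitz LH (HF i)) ->
  (* Assumption A3 *)
  is_gradient f0 g0 -> vec_lipschitz L0 g0 ->
  forall (xh : 'cV[R]_d) (bh : 'cV[R]_n), simplex bh ->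
  norm2 (grad_fbeta gF bh xh) <= eps ->
  (exists (x : 'cV[R]_d) (alpha : R), 0 < alpha < 1 /\
     (forall b', simplex b' ->
        - ((g0 x)^T *m hat_dxstar gF HF x bh *m (b' - bh)) 0 0
          <= alpha * eps0 * norm1 (b' - bh)) /\
     err_grad_f0 F gF mu L LH L0 g0 x bh <= (1 - alpha) * eps0) ->
  pref_stationary F gF HF g0 eps0 eps xh bh.
Proof.
move=> mu_gt0 muL hg hH hl hLH _ g0_lip xh bh sb grad_le.
move=> [x [al [/andP[_ al_lt1] [est err_le]]]].
split=> // b' sb'; move: (est b' sb').
rewrite /dxstar !mulmx_trmx_dotv !hat_dxstar_mul !dotvNr !opprK => est'.
exact: (hypergrad_xstar_le mu_gt0 muL hg hH hl hLH sb g0_lip al_lt1 est' err_le).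
Qed.
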